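(* Let $\mathcal C$ be an additive strict symmetric ribbon category and $(L,\ell)$ a Lie algebra in $\mathcal C$ whose Killing form $\kappa$ is non-degenerate. If $(K,e,r)$ is an Abelian retract ideal of $L$ (i.e. a retract ideal with $\ell\circ(e\otimes e)=0$), then $e=0$, i.e. $K$ is the zero object.
   Context: $\mathcal C$ is additive, strict monoidal, with symmetric braiding $c$, rigid, with twist $\theta$, right duality $b_U:\mathbf 1\to U\otimes U^\vee$, $d_U$, left duality $\tilde b_U$, $\tilde d_U:U\otimes{}^\vee U\to\mathbf 1$, and the induced sovereign structure $\sigma_U:U^\vee\to{}^\vee U$. A Lie algebra is $(L,\ell)$ with $\ell\circ(\mathrm{id}+c_{L,L})=0$ and $\ell^{(3)}\circ[\mathrm{id}+c_{L\otimes L,L}+(c_{L\otimes L,L})^2]=0$, $\ell^{(3)}:=\ell\circ(\mathrm{id}_L\otimes\ell)$. Killing form: $\kappa:=\tilde d_L\circ([\theta_L\circ\ell^{(3)}]\otimes\sigma_L)\circ(\mathrm{id}_{L\otimes L}\otimes b_L)\in\mathrm{Hom}(L\otimes L,\mathbf 1)$. A pairing $\varpi\in\mathrm{Hom}(U\otimes U,\mathbf 1)$ is non-degenerate iff there is $\varpi^-\in\mathrm{Hom}(\mathbf 1,U\otimes U)$ with $(\varpi\otimes\mathrm{id}_U)\circ(\mathrm{id}_U\otimes\varpi^-)=\mathrm{id}_U=(\mathrm{id}_U\otimes\varpi)\circ(\varpi^-\otimes\mathrm{id}_U)$. A retract of $L$ is $(K,e,r)$ with $r\circ e=\mathrm{id}_K$;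 with $p=e\circ r$, it is a retract ideal iff $\ell\circ(e\otimes\mathrm{id}_L)=p\circ\ell\circ(e\otimes\mathrm{id}_L)$. *)

From HB Require Import structures.
From mathcomp Require Import all_boot all_algebra.
Set Implicit Arguments. Unset Strict Implicit. Unset Printing Implicit Defensive.
Import GRing.Theory.
Local Open Scope ring_scope.

(* Data of a (strict) monoidal category with abelian-group hom-sets, a braiding,
   a twist, right duals (U^vee, b_U : 1 -> U (x) U^vee, d_U : U^vee (x) U -> 1)
   and left duals (^vee U, bt_U : 1 -> ^vee U (x) U, dt_U : U (x) ^vee U -> 1).
   Strictness: the associativity / unit equalities hold as (Leibniz) equalities
   of objects; morphisms are transported along them with [eqH]. *)
Record CatData := {
  Obj : Type;
  Mor : Obj -> Obj -> zmodType;
  idm : forall A, Mor A A;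
  mcomp : forall A B D, Mor B D -> Mor A B -> Mor A D;
  tensO : Obj -> Obj -> Obj;
  unitO : Obj;
  tensM : forall A A' B B', Mor A A' -> Mor B B' -> Mor (tensO A B) (tensO A' B');
  assocO : forall A B D, tensO (tensO A B) D = tensO A (tensO B D);
  lunitO : forall A, tensO unitO A = A;
  runitO : forall A, tensO A unitO = A;
  braid : forall A B, Mor (tensO A B) (tensO B A);
  twist : forall A, Mor A A;
  rdual : Obj -> Obj;
  rcoev : forall A, Mor unitO (tensO A (rdual A));
  rdev : forall A, Mor (tensO (rdual A) A) unitO;
  ldual : Obj -> Obj;
  lcoev : forall A, Mor unitO (tensO (ldual A) A);
  ldev : forall A, Mor (tensO A (ldual A)) unitO
}.

Arguments Mor : clear implicits.
Arguments idm {_} _.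
Arguments mcomp {_ _ _ _} _ _.
Arguments tensO {_} _ _.
Arguments unitO {_}.
Arguments tensM {_ _ _ _ _} _ _.
Arguments assocO {_} _ _ _.
Arguments lunitO {_} _.
Arguments runitO {_} _.
Arguments braid {_} _ _.
Arguments twist {_} _.
Arguments rdual {_} _.
Arguments rcoev {_} _.
Arguments rdev {_} _.
Arguments ldual {_} _.
Arguments lcoev {_} _.
Arguments ldev {_} _.

Definition eqH {C : CatData} {A B : Obj C} (e : A = B) : Mor C A B :=
  match e in _ = X return Mor C A X with erefl => idm A end.

Local Notation "g ** f" := (mcomp g f) (at level 40, left associativity).
Local Notation "f <x> g" := (tensM f g) (at level 38).
Local Notation "A (x) B" := (tensO A B) (at level 34).

Section CatDefs.
Variable C : CatData.
Implicit Types A B D : Obj C.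

Definition is_category : Prop :=
  [/\ forall A B (f : Mor C A B), idm B ** f = f,
      forall A B (f : Mor C A B), f ** idm A = f &
      forall A B D E (f : Mor C A B) (g : Mor C B D) (h : Mor C D E),
        h ** (g ** f) = (h ** g) ** f].

Definition is_additive : Prop :=
  [/\ is_category,
      (forall A B D (g : Mor C B D) (f1 f2 : Mor C A B), g ** (f1 + f2) = g ** f1 + g ** f2),
      (forall A B D (g1 g2 : Mor C B D) (f : Mor C A B), (g1 + g2) ** f = g1 ** f + g2 ** f),
      (exists Z : Obj C, idm Z = 0) &
      (forall A B, exists (S : Obj C) (i1 : Mor C A S) (i2 : Mor C B S)
                          (p1 : Mor C S A) (p2 : Mor C S B),
          [/\ p1 ** i1 = idm A, p2 ** i2 = idm B, p1 ** i2 = 0, p2 ** i1 = 0 &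
              i1 ** p1 + i2 ** p2 = idm S])].

Definition is_strict_monoidal : Prop :=
  (forall A B, idm A <x> idm B = idm (A (x) B)) /\
      (forall A1 A2 A3 B1 B2 B3 (f : Mor C A1 A2) (g : Mor C A2 A3)
              (f' : Mor C B1 B2) (g' : Mor C B2 B3),
          (g ** f) <x> (g' ** f') = (g <x> g') ** (f <x> f')) /\
      (forall A A' B B' (f1 f2 : Mor C A A') (g : Mor C B B'),
          (f1 + f2) <x> g = f1 <x> g + f2 <x> g) /\
      (forall A A' B B' (f : Mor C A A') (g1 g2 : Mor C B B'),
          f <x> (g1 + g2) = f <x> g1 + f <x> g2) /\
      (forall A A' B B' D D' (f : Mor C A A') (g : Mor C B B') (h : Mor C D D'),
          (f <x> (g <x> h)) ** eqH (assocO A B D) = eqH (assocO A' B' D') ** ((f <x> g) <x> h)) /\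
      (forall A A' (f : Mor C A A'),
          f ** eqH (lunitO A) = eqH (lunitO A') ** (idm unitO <x> f)) /\
      (forall A A' (f : Mor C A A'),
          f ** eqH (runitO A) = eqH (runitO A') ** (f <x> idm unitO)).

Definition is_symmetric_braiding : Prop :=
  [/\ (forall A A' B B' (f : Mor C A A') (g : Mor C B B'),
          braid A' B' ** (f <x> g) = (g <x> f) ** braid A B),
      (forall A B, braid B A ** braid A B = idm (A (x) B)),
      (forall A B D,
          eqH (assocO B D A) ** braid A (B (x) D) =
          (idm B <x> braid A D) ** eqH (assocO B A D) ** (braid A B <x> idm D)
            ** eqH (esym (assocO A B D))) &
      (forall A B D,
          braid (A (x) B) D =
          eqH (assocO D A B) ** (braid A D <x> idm B) ** eqH (esym (assocO A D B))
            ** (idm A <x> braid B D) ** eqH (assocO A B D))].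

Definition is_rigid : Prop :=
  [/\ (forall A, eqH (runitO A) ** (idm A <x> rdev A) ** eqH (assocO A (rdual A) A)
                   ** (rcoev A <x> idm A) ** eqH (esym (lunitO A)) = idm A),
      (forall A, eqH (lunitO (rdual A)) ** (rdev A <x> idm (rdual A))
                   ** eqH (esym (assocO (rdual A) A (rdual A)))
                   ** (idm (rdual A) <x> rcoev A) ** eqH (esym (runitO (rdual A)))
                 = idm (rdual A)),
      (forall A, eqH (lunitO A) ** (ldev A <x> idm A) ** eqH (esym (assocO A (ldual A) A))
                   ** (idm A <x> lcoev A) ** eqH (esym (runitO A)) = idm A) &
      (forall A, eqH (runitO (ldual A)) ** (idm (ldual A) <x> ldev A)
                   ** eqH (assocO (ldual A) A (ldual A))
                   ** (lcoev A <x> idm (ldual A)) ** eqH (esym (lunitO (ldual A)))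
                 = idm (ldual A))].

Definition rdualM A B (f : Mor C A B) : Mor C (rdual B) (rdual A) :=
  eqH (lunitO (rdual A)) ** (rdev B <x> idm (rdual A))
    ** eqH (esym (assocO (rdual B) B (rdual A)))
    ** (idm (rdual B) <x> (f <x> idm (rdual A)))
    ** (idm (rdual B) <x> rcoev A) ** eqH (esym (runitO (rdual B))).

Definition is_twist : Prop :=
  [/\ (forall A B (f : Mor C A B), twist B ** f = f ** twist A),
      (forall A, exists g : Mor C A A, g ** twist A = idm A /\ twist A ** g = idm A),
      (forall A B, twist (A (x) B) = (twist A <x> twist B) ** braid B A ** braid A B) &
      (forall A, twist (rdual A) = rdualM (twist A))].

Definition is_additive_strict_symmetric_ribbon : Prop :=
  [/\ is_additive, is_strict_monoidal, is_symmetric_braiding, is_rigid & is_twist].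

(* The sovereign structure sigma_U : U^vee -> ^vee U induced by the ribbon
   structure (Turaev's convention): the mate, w.r.t. the left duality, of
   d_U o c_{U,U^vee} o (theta_U (x) id) : U (x) U^vee -> 1. *)
Definition sovereign A : Mor C (rdual A) (ldual A) :=
  eqH (runitO (ldual A))
    ** (idm (ldual A) <x> (rdev A ** braid A (rdual A) ** (twist A <x> idm (rdual A))))
    ** eqH (assocO (ldual A) A (rdual A))
    ** (lcoev A <x> idm (rdual A)) ** eqH (esym (lunitO (rdual A))).

Definition lie3 (L : Obj C) (l : Mor C (L (x) L) L) : Mor C (L (x) (L (x) L)) L :=
  l ** (idm L <x> l).

(* c_{L (x) L, L} seen as an endomorphism of L (x) L (x) L (strictness) *)
Definition cyc (L : Obj C) : Mor C (L (x) (L (x) L)) (L (x) (L (x) L)) :=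
  braid (L (x) L) L ** eqH (esym (assocO L L L)).

Definition is_Lie (L : Obj C) (l : Mor C (L (x) L) L) : Prop :=
  l ** (idm (L (x) L) + braid L L) = 0 /\
  lie3 l ** (idm (L (x) (L (x) L)) + cyc L + cyc L ** cyc L) = 0.

Definition killing (L : Obj C) (l : Mor C (L (x) L) L) : Mor C (L (x) L) unitO :=
  ldev L
    ** ((twist L ** lie3 l ** eqH (assocO L L L)) <x> sovereign L)
    ** eqH (esym (assocO (L (x) L) L (rdual L)))
    ** (idm (L (x) L) <x> rcoev L) ** eqH (esym (runitO (L (x) L))).

Definition nondeg_pairing (U : Obj C) (w : Mor C (U (x) U) unitO) : Prop :=
  exists wm : Mor C unitO (U (x) U),
    eqH (lunitO U) ** (w <x> idm U) ** eqH (esym (assocO U U U))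
      ** (idm U <x> wm) ** eqH (esym (runitO U)) = idm U /\
    eqH (runitO U) ** (idm U <x> w) ** eqH (assocO U U U)
      ** (wm <x> idm U) ** eqH (esym (lunitO U)) = idm U.

Definition is_retract (L K : Obj C) (e : Mor C K L) (r : Mor C L K) : Prop :=
  r ** e = idm K.

Definition is_retract_ideal (L : Obj C) (l : Mor C (L (x) L) L)
    (K : Obj C) (e : Mor C K L) (r : Mor C L K) : Prop :=
  is_retract e r /\ l ** (e <x> idm L) = (e ** r) ** l ** (e <x> idm L).

End CatDefs.

From HB Require Import structures.
From mathcomp Require Import all_boot all_algebra.
From Stdlib Require Import ProofIrrelevance.
Set Implicit Arguments. Unset Strict Implicit. Unset Printing Implicit Defensive.
Import GRing.Theory.
Local Open Scope ring_scope.

(* The Killing form is the partial trace kappa(x, y) = tr(theta o ad_x o ad_y),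
   taken with the duality pairing ldev o (id (x) sigma_L), which equals
   d_L o c o (theta (x) id).  This trace is cyclic, since both the evaluation and
   the coevaluation of a duality slide an endomorphism onto its transpose.
   Put p = e o r.  As K is an ideal, ad_x o ad_(e k) = p o ad_x o ad_(e k), so by
   cyclicity kappa(x, e k) = tr(theta o ad_x o ad_(e k) o p), and ad_(e k) o p = 0
   because K is Abelian.  Hence kappa o (id (x) e) = 0, and the non-degeneracy of
   kappa forces e = 0. *)

Local Notation "g ** f" := (mcomp g f) (at level 40, left associativity).
Local Notation "f <x> g" := (tensM f g) (at level 38).
Local Notation "A (x) B" := (tensO A B) (at level 34).

Section Ribbon.
Variable C : CatData.
Implicit Types A B D : Obj C.
Local Notation M := (Mor C).

Hypothesis comp_idl : forall A B (f : M A B), idm B ** f = f.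
Hypothesis comp_idr : forall A B (f : M A B), f ** idm A = f.
Hypothesis compA : forall A B D E (f : M A B) (g : M B D) (h : M D E),
  h ** (g ** f) = (h ** g) ** f.
Hypothesis compDr : forall A B D (g : M B D) (f1 f2 : M A B),
  g ** (f1 + f2) = g ** f1 + g ** f2.
Hypothesis compDl : forall A B D (g1 g2 : M B D) (f : M A B),
  (g1 + g2) ** f = g1 ** f + g2 ** f.
Hypothesis tens_idm : forall A B, idm A <x> idm B = idm (A (x) B).
Hypothesis tens_comp : forall A1 A2 A3 B1 B2 B3 (f : M A1 A2) (g : M A2 A3)
  (f' : M B1 B2) (g' : M B2 B3), (g ** f) <x> (g' ** f') = (g <x> g') ** (f <x> f').
Hypothesis tensDl : forall A A' B B' (f1 f2 : M A A') (g : M B B'),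
  (f1 + f2) <x> g = f1 <x> g + f2 <x> g.
Hypothesis tensDr : forall A A' B B' (f : M A A') (g1 g2 : M B B'),
  f <x> (g1 + g2) = f <x> g1 + f <x> g2.
Hypothesis assoc_nat : forall A A' B B' D D' (f : M A A') (g : M B B') (h : M D D'),
  (f <x> (g <x> h)) ** eqH (assocO A B D) = eqH (assocO A' B' D') ** ((f <x> g) <x> h).
Hypothesis lunit_nat : forall A A' (f : M A A'),
  f ** eqH (lunitO A) = eqH (lunitO A') ** (idm unitO <x> f).
Hypothesis runit_nat : forall A A' (f : M A A'),
  f ** eqH (runitO A) = eqH (runitO A') ** (f <x> idm unitO).

Lemma eqH_irr A B (e e' : A = B) : eqH e = eqH e'.
Proof. by rewrite (proof_irrelevance _ e e'). Qed.

Lemma eqH_refl A (e : A = A) : eqH e = idm A.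
Proof. by rewrite (proof_irrelevance _ e erefl). Qed.

Lemma eqH_comp A B D (e1 : B = D) (e2 : A = B) (e3 : A = D) : eqH e1 ** eqH e2 = eqH e3.
Proof. by destruct e2, e1; rewrite /= !eqH_refl comp_idl. Qed.

Lemma eqH_split A B D (e : A = D) (e1 : A = B) (e2 : B = D) : eqH e = eqH e2 ** eqH e1.
Proof. by rewrite (eqH_comp e2 e1 e). Qed.

Lemma eqH_trans A B D (e1 : B = D) (e2 : A = B) : eqH e1 ** eqH e2 = eqH (etrans e2 e1).
Proof. exact: eqH_comp. Qed.

Lemma comp_eqH_trans X A B D (e1 : B = D) (e2 : A = B) (k : M D X) :
  k ** eqH e1 ** eqH e2 = k ** eqH (etrans e2 e1).
Proof. by rewrite -compA eqH_trans. Qed.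

Lemma tensl_eqH A B B' (e : B = B') (e' : A (x) B = A (x) B') : idm A <x> eqH e = eqH e'.
Proof. by destruct e; rewrite !eqH_refl tens_idm. Qed.

Lemma tensr_eqH A B B' (e : B = B') (e' : B (x) A = B' (x) A) : eqH e <x> idm A = eqH e'.
Proof. by destruct e; rewrite !eqH_refl tens_idm. Qed.

Lemma tensl_eqH_congr A B B' (e : B = B') : idm A <x> eqH e = eqH (congr1 (tensO A) e).
Proof. exact: tensl_eqH. Qed.

Lemma tensr_eqH_congr A B B' (e : B = B') : eqH e <x> idm A = eqH (congr1 (tensO^~ A) e).
Proof. exact: tensr_eqH. Qed.

Lemma eqH_nat_inv A A' B B' (e : A = A') (e' : B = B') (X : M A' B') (Y : M A B) :
  X ** eqH e = eqH e' ** Y -> Y ** eqH (esym e) = eqH (esym e') ** X.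
Proof.
move=> natXY.
have -> : Y = eqH (esym e') ** X ** eqH e by rewrite -compA natXY compA eqH_comp eqH_refl comp_idl.
by rewrite -!compA eqH_comp eqH_refl comp_idr.
Qed.

Lemma assoc_inv_nat A A' B B' D D' (f : M A A') (g : M B B') (h : M D D') :
  ((f <x> g) <x> h) ** eqH (esym (assocO A B D))
  = eqH (esym (assocO A' B' D')) ** (f <x> (g <x> h)).
Proof. exact: eqH_nat_inv (assoc_nat _ _ _). Qed.

Lemma lunit_inv_nat A A' (f : M A A') :
  (idm unitO <x> f) ** eqH (esym (lunitO A)) = eqH (esym (lunitO A')) ** f.
Proof. exact: eqH_nat_inv (lunit_nat _). Qed.

Lemma runit_inv_nat A A' (f : M A A') :
  (f <x> idm unitO) ** eqH (esym (runitO A)) = eqH (esym (runitO A')) ** f.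
Proof. exact: eqH_nat_inv (runit_nat _). Qed.

Lemma comp0r A B D (g : M B D) : g ** (0 : M A B) = 0.
Proof. by apply: (addrI (g ** 0)); rewrite -compDr !addr0. Qed.

Lemma comp0l A B D (f : M A B) : (0 : M B D) ** f = 0.
Proof. by apply: (addrI (0 ** f)); rewrite -compDl !addr0. Qed.

Lemma compNl A B D (g : M B D) (f : M A B) : (- g) ** f = - (g ** f).
Proof. by apply: (addrI (g ** f)); rewrite -compDl !subrr comp0l. Qed.

Lemma compNr A B D (g : M B D) (f : M A B) : g ** (- f) = - (g ** f).
Proof. by apply: (addrI (g ** f)); rewrite -compDr !subrr comp0r. Qed.

Lemma tens0l A A' B B' (g : M B B') : (0 : M A A') <x> g = 0.
Proof. by apply: (addrI (0 <x> g)); rewrite -tensDl !addr0. Qed.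

Lemma tens0r A A' B B' (f : M A A') : f <x> (0 : M B B') = 0.
Proof. by apply: (addrI (f <x> 0)); rewrite -tensDr !addr0. Qed.

Lemma comp_congr2 A B B' D E (g : M B D) (f : M A B) (g' : M B' D) (f' : M A B') (k : M D E) :
  g ** f = g' ** f' -> k ** g ** f = k ** g' ** f'.
Proof. by move=> eq_gf; rewrite -!compA eq_gf. Qed.

Lemma comp_congr1 A B D E (g : M B D) (f : M A B) (h : M A D) (k : M D E) :
  g ** f = h -> k ** g ** f = k ** h.
Proof. by move=> eq_gf; rewrite -compA eq_gf. Qed.

Lemma tensl_comp A B D E (g : M D E) (f : M B D) :
  idm A <x> (g ** f) = (idm A <x> g) ** (idm A <x> f).
Proof. by rewrite -tens_comp comp_idl. Qed.

Lemma tensr_comp A B D E (g : M D E) (f : M B D) :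
  (g ** f) <x> idm A = (g <x> idm A) ** (f <x> idm A).
Proof. by rewrite -tens_comp comp_idl. Qed.

Lemma tens_interchangel A A' B B' (f : M A A') (g : M B B') :
  (f <x> idm B') ** (idm A <x> g) = f <x> g.
Proof. by rewrite -tens_comp comp_idl comp_idr. Qed.

Lemma tens_interchanger A A' B B' (f : M A A') (g : M B B') :
  (idm A' <x> g) ** (f <x> idm B) = f <x> g.
Proof. by rewrite -tens_comp comp_idl comp_idr. Qed.

Lemma tens_compr A A' B B' B'' (f : M A A') (g : M B' B'') (h : M B B') :
  (f <x> g) ** (idm A <x> h) = f <x> (g ** h).
Proof. by rewrite -tens_comp comp_idr. Qed.

Lemma unit_maps_interchange A B (f : M A unitO) (g : M B unitO) :
  f ** eqH (runitO A) ** (idm A <x> g) = g ** eqH (lunitO B) ** (f <x> idm B).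
Proof.
rewrite runit_nat lunit_nat -!compA -!tens_comp !comp_idl !comp_idr.
by rewrite (eqH_irr (runitO unitO) (lunitO unitO)).
Qed.

Section LeftDuality.
Variables (X Y : Obj C) (ev : M (X (x) Y) unitO) (coev : M unitO (Y (x) X)).
Hypothesis zigzag : eqH (lunitO X) ** (ev <x> idm X) ** eqH (esym (assocO X Y X))
  ** (idm X <x> coev) ** eqH (esym (runitO X)) = idm X.

Definition mate W (E : M (X (x) W) unitO) : M W Y :=
  eqH (runitO Y) ** (idm Y <x> E) ** eqH (assocO Y X W) ** (coev <x> idm W)
    ** eqH (esym (lunitO W)).

Lemma ev_mate W (E : M (X (x) W) unitO) : ev ** (idm X <x> mate E) = E.
Proof.
rewrite /mate !tensl_comp !compA.
rewrite (tensl_eqH _ (etrans (esym (assocO X Y unitO)) (runitO (X (x) Y)))).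
rewrite (eqH_split _ (esym (assocO X Y unitO)) (runitO _)).
rewrite !compA (comp_congr2 _ (esym (assoc_inv_nat _ _ _))) tens_idm unit_maps_interchange.
rewrite -[idm (X (x) W)]tens_idm.
rewrite (eqH_split _ (etrans (esym (assocO X Y (X (x) W))) (esym (assocO (X (x) Y) X W)))
  (assocO (X (x) Y) X W)).
rewrite !compA (comp_congr2 _ (assoc_nat _ _ _)) comp_eqH_trans.
rewrite (tensl_eqH _ (etrans (congr1 (tensO^~ W) (esym (runitO X))) (assocO X unitO W))).
rewrite (eqH_split _ (congr1 (tensO^~ W) (esym (runitO X))) (assocO X unitO W)).
rewrite !compA (comp_congr2 _ (assoc_nat _ _ _)) !tensl_eqH_congr !comp_eqH_trans.
rewrite (eqH_irr (etrans _ _) (congr1 (tensO^~ W) (esym (assocO X Y X)))).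
rewrite (eqH_irr (etrans (assocO unitO X W) _) (congr1 (tensO^~ W) (lunitO X))).
by rewrite -!tensr_eqH_congr -!compA -!tensr_comp !compA zigzag tens_idm comp_idr.
Qed.

End LeftDuality.

Section RightDuality.
Variables (X Y : Obj C) (ev : M (Y (x) X) unitO) (coev : M unitO (X (x) Y)).
Hypothesis zigzag : eqH (runitO X) ** (idm X <x> ev) ** eqH (assocO X Y X)
  ** (coev <x> idm X) ** eqH (esym (lunitO X)) = idm X.

(* For [ev := rdev X] and [coev := rcoev X] this is [rdualM B]. *)
Definition transpose (B : M X X) : M Y Y :=
  eqH (lunitO Y) ** (ev <x> idm Y) ** eqH (esym (assocO Y X Y))
    ** (idm Y <x> (B <x> idm Y)) ** (idm Y <x> coev) ** eqH (esym (runitO Y)).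

Lemma coev_transpose (B : M X X) : (B <x> idm Y) ** coev = (idm X <x> transpose B) ** coev.
Proof.
have -> : (B <x> idm Y) ** coev = ((eqH (runitO X) ** (idm X <x> ev) ** eqH (assocO X Y X)
    ** (coev <x> idm X) ** eqH (esym (lunitO X))) <x> idm Y) ** (B <x> idm Y) ** coev.
  by rewrite zigzag tens_idm comp_idl.
rewrite /transpose !tensl_comp !tensr_comp ?compA.
rewrite (tensr_eqH _ (etrans (esym (lunitO (X (x) Y))) (esym (assocO unitO X Y)))).
rewrite (eqH_split _ (esym (lunitO (X (x) Y))) (esym (assocO unitO X Y))).
rewrite ?compA (comp_congr2 _ (esym (lunit_inv_nat _))) (comp_congr2 _ (esym (lunit_inv_nat _))).
rewrite (comp_congr2 _ (esym (assoc_inv_nat _ _ _))).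
rewrite (comp_congr1 _ (esym (tensr_comp _ _ _))) tens_interchangel.
rewrite (comp_congr2 _ (assoc_inv_nat _ _ _)) (comp_congr1 _ (tens_compr _ _ _)).
rewrite (tensl_eqH _ (etrans (esym (runitO (X (x) Y))) (assocO X Y unitO))).
rewrite (eqH_split _ (esym (runitO (X (x) Y))) (assocO X Y unitO)).
rewrite ?compA (comp_congr2 _ (esym (runit_inv_nat _))).
rewrite (comp_congr2 _ (assoc_nat _ _ _)) (comp_congr2 _ (assoc_nat _ _ _)).
rewrite !tensl_eqH_congr comp_eqH_trans.
rewrite (eqH_split _ (etrans (esym (assocO (X (x) Y) X Y)) (congr1 (tensO^~ Y) (assocO X Y X)))
  (assocO X (Y (x) X) Y)).
rewrite ?compA (comp_congr2 _ (assoc_nat _ _ _)) eqH_trans !tens_idm.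
rewrite (comp_congr1 _ (esym (tensl_comp _ _ _))) (comp_congr1 _ (tens_interchanger _ _)).
rewrite !tensr_eqH_congr comp_eqH_trans.
by rewrite (eqH_irr (congr1 (tensO^~ Y) (runitO X))
    (etrans (assocO X unitO Y) (congr1 (tensO X) (lunitO Y))))
  (eqH_irr (esym (lunitO unitO)) (esym (runitO unitO))).
Qed.

(* Both sides contract [b] with two copies of [ev]; only the order differs. *)
Lemma ev_exchange (b : M unitO (X (x) Y)) :
  ev ** ((eqH (lunitO Y) ** (ev <x> idm Y) ** eqH (esym (assocO Y X Y)) ** (idm Y <x> b)
     ** eqH (esym (runitO Y))) <x> idm X)
  = ev ** (idm Y <x> (eqH (runitO X) ** (idm X <x> ev) ** eqH (assocO X Y X) ** (b <x> idm X)
        ** eqH (esym (lunitO X)))).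
Proof.
rewrite !tensl_comp !tensr_comp ?compA.
rewrite (tensr_eqH _ (etrans (assocO unitO Y X) (lunitO (Y (x) X)))).
rewrite (eqH_split _ (assocO unitO Y X) (lunitO (Y (x) X))).
rewrite ?compA lunit_nat (comp_congr2 _ (esym (assoc_nat _ _ _))) tens_idm.
rewrite (comp_congr1 _ (tens_interchanger _ _)).
rewrite -tens_interchanger ?compA -lunit_nat -unit_maps_interchange.
rewrite (tensl_eqH _ (etrans (esym (assocO Y X unitO)) (runitO (Y (x) X)))).
rewrite (eqH_split _ (esym (assocO Y X unitO)) (runitO (Y (x) X))).
rewrite ?compA (comp_congr2 _ (esym (assoc_inv_nat _ _ _))) tens_idm.
rewrite (tensl_eqH _ (etrans (congr1 (tensO^~ X) (esym (runitO Y))) (assocO Y unitO X))).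
rewrite (eqH_split _ (congr1 (tensO^~ X) (esym (runitO Y))) (assocO Y unitO X)).
rewrite ?compA (comp_congr2 _ (assoc_nat _ _ _)) !tensl_eqH_congr !tensr_eqH_congr !comp_eqH_trans.
by congr (_ ** _ ** _ ** _ ** _ ** _); apply: eqH_irr.
Qed.

Lemma ev_transpose (B : M X X) : ev ** (transpose B <x> idm X) = ev ** (idm Y <x> B).
Proof.
rewrite /transpose -(compA _ (idm Y <x> (B <x> idm Y))) -tensl_comp ev_exchange.
congr (_ ** (_ <x> _)).
rewrite tensr_comp ?compA -(comp_congr2 _ (assoc_nat _ _ _)) tens_idm.
rewrite (comp_congr1 _ (tens_interchanger _ _)) -tens_interchangel ?compA -runit_nat.
by have := congr1 (mcomp B) zigzag; rewrite comp_idr !compA.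
Qed.

End RightDuality.

Hypothesis braid_nat : forall A A' B B' (f : M A A') (g : M B B'),
  braid A' B' ** (f <x> g) = (g <x> f) ** braid A B.
Hypothesis twist_nat : forall A B (f : M A B), twist B ** f = f ** twist A.

Section PartialTrace.
Variable L : Obj C.
Hypothesis rzigzag : eqH (runitO L) ** (idm L <x> rdev L) ** eqH (assocO L (rdual L) L)
  ** (rcoev L <x> idm L) ** eqH (esym (lunitO L)) = idm L.
Hypothesis lzigzag : eqH (lunitO L) ** (ldev L <x> idm L) ** eqH (esym (assocO L (ldual L) L))
  ** (idm L <x> lcoev L) ** eqH (esym (runitO L)) = idm L.

Definition ribbon_ev : M (L (x) rdual L) unitO :=
  rdev L ** braid L (rdual L) ** (twist L <x> idm (rdual L)).

(* [sovereign L] is [mate (ldev L) (lcoev L) ribbon_ev] by definition. *)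
Lemma ldev_sovereign : ldev L ** (idm L <x> sovereign L) = ribbon_ev.
Proof. exact: (ev_mate lzigzag ribbon_ev). Qed.

Lemma ribbon_ev_slide (B : M L L) :
  ribbon_ev ** (B <x> idm (rdual L)) = ribbon_ev ** (idm L <x> rdualM B).
Proof.
rewrite /ribbon_ev -!compA -!tensr_comp twist_nat tensr_comp !compA.
rewrite (comp_congr2 _ (braid_nat _ _)) -(ev_transpose rzigzag B).
by rewrite -(comp_congr2 _ (braid_nat _ _)) (comp_congr1 _ (tens_interchanger _ _))
  (comp_congr1 _ (tens_interchangel _ _)).
Qed.

(* The trace over the last tensor factor; [killing l] is by definition the
   [ptrace] of [theta o lie3 l o assoc]. *)
Definition ptrace X (F : M (X (x) L) L) : M X unitO :=
  ldev L ** (F <x> sovereign L) ** eqH (esym (assocO X L (rdual L)))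
    ** (idm X <x> rcoev L) ** eqH (esym (runitO X)).

Lemma ptraceE X (F : M (X (x) L) L) :
  ptrace F = ribbon_ev ** (F <x> idm (rdual L)) ** eqH (esym (assocO X L (rdual L)))
    ** (idm X <x> rcoev L) ** eqH (esym (runitO X)).
Proof. by rewrite /ptrace -tens_interchanger compA ldev_sovereign. Qed.

Lemma ptrace_natural X X' (F : M (X (x) L) L) (g : M X' X) :
  ptrace F ** g = ptrace (F ** (g <x> idm L)).
Proof.
rewrite !ptraceE -!compA -runit_inv_nat ?compA (comp_congr1 _ (tens_interchanger _ _)).
rewrite -[g <x> rcoev L]tens_interchangel -[idm (L (x) rdual L)]tens_idm ?compA.
by rewrite -(comp_congr2 _ (assoc_inv_nat _ _ _)) (comp_congr1 _ (esym (tensr_comp _ _ _))).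
Qed.

Lemma ptrace_slide X (B : M L L) (F : M (X (x) L) L) :
  ptrace (B ** F) = ptrace (F ** (idm X <x> B)).
Proof.
rewrite !ptraceE tensr_comp compA ribbon_ev_slide ?compA (comp_congr1 _ (tens_interchanger _ _)).
rewrite -[F <x> rdualM B]tens_interchangel -[idm (X (x) L)]tens_idm ?compA.
rewrite (comp_congr2 _ (assoc_inv_nat _ _ _)) (comp_congr1 _ (esym (tensl_comp _ _ _))).
rewrite -[(idm L <x> rdualM B) ** rcoev L](coev_transpose rzigzag B) tensl_comp ?compA.
by rewrite (comp_congr2 _ (esym (assoc_inv_nat _ _ _))) (comp_congr1 _ (esym (tensr_comp _ _ _))).
Qed.

Lemma ptrace0 X : ptrace (0 : M (X (x) L) L) = 0.
Proof. by rewrite /ptrace tens0l comp0r !comp0l. Qed.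

Section AbelianIdeal.
Variables (l : M (L (x) L) L) (K : Obj C) (e : M K L) (r : M L K).
Hypothesis antisym : l ** (idm (L (x) L) + braid L L) = 0.
Hypothesis idealP : l ** (e <x> idm L) = (e ** r) ** l ** (e <x> idm L).
Hypothesis abelianP : l ** (e <x> e) = 0.

Lemma bracket_braid : l = - (l ** braid L L).
Proof. by apply/eqP; rewrite -addr_eq0 -[X in X + _]comp_idr -compDr antisym. Qed.

Lemma ideal_projl : l ** ((e ** r) <x> idm L) = (e ** r) ** l ** ((e ** r) <x> idm L).
Proof. by rewrite tensr_comp !compA -idealP. Qed.

Lemma ideal_projr : l ** (idm L <x> (e ** r)) = (e ** r) ** l ** (idm L <x> (e ** r)).
Proof.
rewrite {1}bracket_braid compNl -compA braid_nat compA ideal_projl -!compA -braid_nat !compA.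
by rewrite [in RHS]bracket_braid compNr compNl !compA.
Qed.

Definition double_bracket : M ((L (x) K) (x) L) L :=
  l ** (idm L <x> (l ** (e <x> idm L))) ** eqH (assocO L K L).

Lemma killing_idealE : killing l ** (idm L <x> e) = ptrace (twist L ** double_bracket).
Proof.
rewrite [killing l]/(ptrace _) ptrace_natural /lie3 /double_bracket -!compA.
by rewrite -assoc_nat [_ ** (_ ** eqH _)]compA -tensl_comp.
Qed.

Lemma double_bracket_ideal : (e ** r) ** double_bracket = double_bracket.
Proof.
have bracket_in_K : idm L <x> (l ** (e <x> idm L))
    = (idm L <x> (e ** r)) ** (idm L <x> (l ** (e <x> idm L))).
  by rewrite -tensl_comp compA -idealP.
by rewrite /double_bracket bracket_in_K !compA -ideal_projr.
Qed.

Lemma double_bracket_abelian : double_bracket ** (idm (L (x) K) <x> (e ** r)) = 0.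
Proof.
rewrite /double_bracket -[idm (L (x) K)]tens_idm -!compA -assoc_nat !compA.
rewrite (comp_congr1 _ (esym (tensl_comp _ _ _))) -[l ** (e <x> idm L) ** _]compA.
rewrite tens_interchangel -[e <x> (e ** r)]tens_compr compA abelianP.
by rewrite comp0l tens0r comp0r comp0l.
Qed.

Lemma killing_ideal0 : killing l ** (idm L <x> e) = 0.
Proof.
rewrite killing_idealE -double_bracket_ideal compA twist_nat -compA ptrace_slide.
by rewrite -compA double_bracket_abelian comp0r ptrace0.
Qed.

End AbelianIdeal.
End PartialTrace.

Lemma nondeg_pairing_annihilator U V (w : M (U (x) U) unitO) (w' : M unitO (U (x) U))
    (f : M V U) :
  eqH (runitO U) ** (idm U <x> w) ** eqH (assocO U U U) ** (w' <x> idm U)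
    ** eqH (esym (lunitO U)) = idm U ->
  w ** (idm U <x> f) = 0 -> f = 0.
Proof.
move=> snake wf0.
rewrite -[f]comp_idl -snake (comp_congr2 _ (esym (lunit_inv_nat _))).
rewrite (comp_congr1 _ (tens_interchangel _ _)) -[w' <x> f]tens_interchanger.
rewrite -[idm (U (x) U)]tens_idm !compA -(comp_congr2 _ (assoc_nat _ _ _)).
by rewrite (comp_congr1 _ (esym (tensl_comp _ _ _))) wf0 tens0r comp0r !comp0l.
Qed.

End Ribbon.

Theorem mainTheorem8 (C : CatData)
  (HC : is_additive_strict_symmetric_ribbon C)
  (L : Obj C) (l : Mor C (tensO L L) L)
  (HL : is_Lie l)
  (Hkappa : nondeg_pairing (killing l))
  (K : Obj C) (e : Mor C K L) (r : Mor C L K)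
  (Hideal : is_retract_ideal l e r)
  (Habel : mcomp l (tensM e e) = 0) :
  e = 0.
Proof.
case: HC => [[[comp_idl comp_idr compA] compDr compDl _ _]
  [tens_idm [tens_comp [tensDl [tensDr [assoc_nat [lunit_nat runit_nat]]]]]]
  [braid_nat _ _ _] [rzigzag _ lzigzag _] [twist_nat _ _ _]].
case: HL => antisym _.
case: Hkappa => kappa' [_ kappa_snake].
case: Hideal => _ idealP.
apply: (nondeg_pairing_annihilator _ _ _ _ _ _ _ _ _ _ kappa_snake) => //.
by apply: (killing_ideal0 _ _ _ _ _ _ _ _ _ _ _ _ _ _ (rzigzag L) (lzigzag L) antisym idealP).
Qed.
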